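(* In the setting of the context, assume $q<q_c$, let $\beta\in(0,1)$, and suppose $\bar\delta(q)>0$ and $$N_q>\frac{\log(2/\beta)}{2\bar\delta(q)^2}.$$ Then with probability at least $1-\beta$ (over the samples) the following holds: if $\hat q<q_c$, then $\hat K$ mean-square stabilizes the system.
   Context: Let $A\in\mathbb{R}^{n\times n}$, $B\in\mathbb{R}^{n\times m}$ with $(A,B)$ stabilizable, and let $Q$, $R$ be symmetric positive definite. Consider $x_{t+1}=Ax_t+\lambda_tBu_t$, $t\ge0$, with $x_0$ random with finite mean and covariance and $\{\lambda_t\}$ i.i.d. Bernoulli, independent of $x_0$, with $\mathcal{P}(\lambda_t=0)=q$, $q\in(0,1)$ unknown. The estimate is $\hat q=\frac1{N_q}\sum_{i=1}^{N_q}(1-\lambda_i)$ from $N_q$ i.i.d. samples $\lambda_1,\dots,\lambda_{N_q}$ with the same Bernoulli law. For $p\in[0,1)$ the modified Riccati equation with parameter $p$ is $X=Q+A^\top XA-(1-p)A^\top XB(R+B^\top XB)^{-1}B^\top XA$; $q_c$ is the critical loss probability such that for every $p\in[0,q_c)$ this equation has a unique positive definite solution. For $\hat q\in[0,q_c)$ let $\hat P$ be the positive definite solution for parameter $\hat q$ and $\hat K=-(R+B^\top\hat PB)^{-1}B^\top\hat PA$; $\hat K$ mean-square stabilizes the system if the closed loop $x_{t+1}=(A+\lambda_tB\hat K)x_t$ satisfies $\lim_{t\to\infty}\mathbb{E}\{x_t^\top x_t\}=0$. Define $\mathcal C(q,\hat q)=Q+(1-q)\hat K^\top R\hat K-(q-\hat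 q)A^\top\hat PB(R+B^\top\hat PB)^{-1}B^\top\hat PA$ and the stability threshold $\bar\delta(q)=\sup\{\delta\ge0:\ \mathcal C(q,\hat q)\succ0 \text{ for all } \hat q\in[0,q_c)\text{ with } q-\hat q<\delta\}$. *)

From HB Require Import structures.
From mathcomp Require Import all_boot all_order all_algebra.
From mathcomp Require Import all_classical all_reals all_analysis.
Set Implicit Arguments. Unset Strict Implicit. Unset Printing Implicit Defensive.
Import Order.TTheory GRing.Theory Num.Theory.
Import numFieldNormedType.Exports.
Local Open Scope classical_set_scope.
Local Open Scope ring_scope.

Section Defs.
Variable R : realType.

Definition posdef (k : nat) (M : 'M[R]_k) : Prop :=
  M^T = M /\ forall x : 'cV[R]_k, x != 0 -> 0 < (x^T *m M *m x) 0 0.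

Definition stable_mx (n : nat) (M : 'M[R]_n) : Prop :=
  forall (x0 : 'cV[R]_n) (i : 'I_n),
    (fun t : nat => (iter t (mulmx M) x0) i 0) @ \oo --> (0 : R).

Definition stabilizable (n m : nat) (A : 'M[R]_n) (B : 'M[R]_(n, m)) : Prop :=
  exists K : 'M[R]_(m, n), stable_mx (A + B *m K).

Variables (n m : nat) (A : 'M[R]_n) (B : 'M[R]_(n, m)) (Q : 'M[R]_n) (Rw : 'M[R]_m).

Definition riccati_term (X : 'M[R]_n) : 'M[R]_n :=
  A^T *m X *m B *m invmx (Rw + B^T *m X *m B) *m B^T *m X *m A.

Definition mare (p : R) (X : 'M[R]_n) : 'M[R]_n :=
  Q + A^T *m X *m A - (1 - p) *: riccati_term X.

(* the positive definite solution of the MARE with parameter p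
   (unique for p in [0, q_c); chosen by xget) *)
Definition Phat (p : R) : 'M[R]_n :=
  xget 0 [set X | posdef X /\ X = mare p X].

Definition gain (P : 'M[R]_n) : 'M[R]_(m, n) :=
  - (invmx (Rw + B^T *m P *m B) *m B^T *m P *m A).

Fixpoint traj (K : 'M[R]_(m, n)) (lam : nat -> bool) (x0 : 'cV[R]_n) (t : nat)
  : 'cV[R]_n :=
  match t with
  | 0 => x0
  | t'.+1 => (A + (lam t')%:R *: (B *m K)) *m traj K lam x0 t'
  end.

Definition bern (q : R) (b : bool) : R := if b then 1 - q else q.

Definition msq_given_x0 (q : R) (K : 'M[R]_(m, n)) (x0 : 'cV[R]_n) (t : nat) : R :=
  \sum_(s : t.-tuple bool)
     (\prod_(i < t) bern q (tnth s i)) *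
     ((traj K (fun j => nth false s j) x0 t)^T *m traj K (fun j => nth false s j) x0 t) 0 0.

(* K mean-square stabilizes the closed loop: for every random initial state x0
   with finite mean and covariance (defined on an arbitrary probability space,
   independent of the i.i.d. Bernoulli losses, so that the joint law is the
   product law), lim_t E{x_t^T x_t} = 0. *)
Definition ms_stabilizes (q : R) (K : 'M[R]_(m, n)) : Prop :=
  forall (d : measure_display) (T : measurableType d) (P : probability T R)
         (x0 : T -> 'cV[R]_n),
    (forall i : 'I_n, measurable_fun setT (fun w => x0 w i 0)) ->
    (forall i : 'I_n, P.-integrable setT (fun w => ((x0 w i 0) ^+ 2)%:E)) ->
    (fun t : nat => (\int[P]_w (msq_given_x0 q K (x0 w) t)%:E)%E)
      @ \oo --> (0 : \bar R)%E.

Definition Cmat (q qh : R) : 'M[R]_n :=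
  Q + (1 - q) *: ((gain (Phat qh))^T *m Rw *m gain (Phat qh))
    - (q - qh) *: riccati_term (Phat qh).

(* stability threshold delta_bar(q) (in the extended reals: may be +oo) *)
Definition delta_bar (qc q : R) : \bar R :=
  ereal_sup [set (d%:E)%E | d in
    [set d : R | 0 <= d /\
       forall qh : R, 0 <= qh < qc -> q - qh < d -> posdef (Cmat q qh)]].

End Defs.

(* The sample-size condition N > log(2/beta) / (2 dbar^2), read in the
   extended reals: when dbar = +oo the right-hand side is 0. *)
Definition sample_cond (R : realType) (N : nat) (beta : R) (d : \bar R) : Prop :=
  match d with
  | EFin r => ln (2 / beta) / (2 * r ^+ 2) < N%:R
  | +oo%E => 0 < N%:R :> R
  | -oo%E => False
  end.

Definition qhat (R : realType) (N : nat) (s : N.-tuple bool) : R :=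
  (\sum_(i < N) (1 - ((tnth s i : nat)%:R : R))) / N%:R.

Definition sample_prob (R : realType) (q : R) (N : nat)
  (E : N.-tuple bool -> Prop) : R :=
  \sum_(s : N.-tuple bool | `[< E s >]) \prod_(i < N) bern q (tnth s i).

(* By Hoeffding's inequality, q - qhat < delta_bar(q) except with probability at
   most exp(-2 N delta_bar^2) < beta / 2.  On that event, if qhat < q_c, the matrix
   C = C(q, qhat) is positive definite, and the modified Riccati equation solved by
   P = Phat(qhat) rearranges, with K = Khat, into the Lyapunov identity
     q A^T P A + (1 - q) (A + B K)^T P (A + B K) = P - C.
   As C dominates a fixed multiple of P, the form x^T P x contracts in expectation by
   a factor rho < 1 at each step, so E[x_t^T x_t] <= D rho^t |x_0|^2; integrating over
   the square-integrable initial state gives mean-square stability. *)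

From HB Require Import structures.
From mathcomp Require Import all_boot all_order all_algebra.
From mathcomp Require Import all_classical all_reals all_analysis.
From mathcomp Require Import lra ring.
From mathcomp Require Import measurable_realfun.
Set Implicit Arguments. Unset Strict Implicit. Unset Printing Implicit Defensive.
Import Order.TTheory GRing.Theory Num.Theory.
Import numFieldNormedType.Exports.
Local Open Scope classical_set_scope.
Local Open Scope ring_scope.

(** * Hoeffding's inequality for Bernoulli samples *)

Section HoeffdingLemma.
Variable R : realType.

Lemma is_derive_mulr_const (c x : R) : is_derive x 1 (fun h : R => h * c) c.
Proof.
change (is_derive x 1 ((@id R) * cst c) c).
by apply: is_derive_eq; rewrite /GRing.scale /= mulr0 add0r mulr1.
Qed.

Lemma is_derive_ler0_le (f df : R -> R) (a b : R) : a <= b ->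
  (forall x : R, is_derive x 1 f (df x)) -> (forall x, a <= x <= b -> df x <= 0) ->
  f b <= f a.
Proof.
move=> ab fd df_le0.
have cf : {within `[a, b], continuous f}.
  by apply: derivable_within_continuous => x _; case: (fd x).
have [c + fba] := MVT_segment ab (fun x _ => fd x) cf.
rewrite in_itv /= => /df_le0 dfc.
by rewrite -subr_le0 fba mulr_le0_ge0 // subr_ge0.
Qed.

Variable q : R.
Hypothesis q01 : 0 < q < 1.

Let a (x : R) := q * expR (x * (q - 1)).
Let b (x : R) := (1 - q) * expR (x * q).
Let M (x : R) := a x + b x.
Let M' (x : R) := (q - 1) * a x + q * b x.

Let M_gt0 x : 0 < M x.
Proof. by case/andP: q01 => q0 q1; rewrite addr_gt0 ?mulr_gt0 ?expR_gt0 ?subr_gt0. Qed.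

Let is_derive_a (x : R) : is_derive x 1 a ((q - 1) * a x).
Proof.
change (is_derive x 1 (q \*: (fun h => expR (h * (q - 1)))) ((q - 1) * a x)).
by apply: is_derive_eq; rewrite /GRing.scale /= /a; ring.
Qed.

Let is_derive_b (x : R) : is_derive x 1 b (q * b x).
Proof.
change (is_derive x 1 ((1 - q) \*: (fun h => expR (h * q))) (q * b x)).
by apply: is_derive_eq; rewrite /GRing.scale /= /b; ring.
Qed.

Let is_derive_M (x : R) : is_derive x 1 M (M' x).
Proof. exact: (is_deriveD (is_derive_a x) (is_derive_b x) : is_derive x 1 (a \+ b) _). Qed.

Let is_derive_M' (x : R) : is_derive x 1 M' ((q - 1) ^+ 2 * a x + q ^+ 2 * b x).
Proof.
have := is_deriveD (is_deriveZ (q - 1) (is_derive_a x)) (is_deriveZ q (is_derive_b x)).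
by rewrite /GRing.scale /= !mulrA -!expr2.
Qed.

(* (ln M)'' = a b / M^2 <= 1/4 by AM-GM, and (ln M)'(0) = 0. *)
Let M'_le y : 0 <= y -> M' y <= y / 4 * M y.
Proof.
move=> y0.
pose r x := M' x / M x - x / 4.
have dr (x : R) : is_derive x 1 r (a x * b x / M x ^+ 2 - 4^-1).
  have := is_deriveB (is_deriveM (is_derive_M' x)
     (is_deriveV (lt0r_neq0 (M_gt0 x)) (is_derive_M x))) (is_derive_mulr_const 4^-1 x).
  move=> /is_derive_eq; apply; rewrite /GRing.scale /= /M' /M.
  by field; exact: lt0r_neq0 (M_gt0 x).
have : r y <= r 0.
  apply: is_derive_ler0_le y0 dr _ => x _.
  rewrite subr_le0 ler_pdivrMr ?exprn_gt0 // -subr_ge0.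
  have -> : 4^-1 * M x ^+ 2 - a x * b x = ((a x - b x) / 2) ^+ 2 by rewrite /M; field.
  exact: sqr_ge0.
have -> : r 0 = 0.
  rewrite /r mul0r subr0 (_ : M' 0 = 0) ?mul0r //.
  by rewrite /M' /a /b !mul0r expR0; ring.
by rewrite /r subr_le0 ler_pdivrMr // mulrC mulrA.
Qed.

Lemma hoeffding_bernoulli h : 0 <= h ->
  q * expR (h * (q - 1)) + (1 - q) * expR (h * q) <= expR (h ^+ 2 / 8).
Proof.
move=> h0; pose c : R := - 8^-1.
pose g x := expR (x * (x * c)) * M x.
have dg (x : R) : is_derive x 1 g (expR (x * (x * c)) * (M' x - x / 4 * M x)).
  have dsq := is_deriveM (is_derive_id x 1) (is_derive_mulr_const c x).
  have := is_deriveM (is_derive1_comp (is_derive_expR _) dsq) (is_derive_M x).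
  move=> /is_derive_eq; apply; rewrite /GRing.scale /=.
  by rewrite (_ : (id * _) x = x * (x * c)) // /c; field.
have : g h <= g 0.
  apply: is_derive_ler0_le h0 dg _ => x /andP[x0 _].
  by rewrite mulr_ge0_le0 ?expR_ge0 // subr_le0 M'_le.
have -> : g 0 = 1 by rewrite /g /M /a /b !mul0r expR0 !mulr1 mul1r addrC subrK.
have -> : h ^+ 2 / 8 = - (h * (h * c)) by rewrite /c; field.
by rewrite /g -ler_pdivlMl ?expR_gt0 // mulr1 -expRN.
Qed.

End HoeffdingLemma.

Lemma sum_tuple_prod (R : comPzSemiRingType) (T : finType) (N : nat) (F : 'I_N -> T -> R) :
  \sum_(s : N.-tuple T) \prod_(i < N) F i (tnth s i) = \prod_(i < N) \sum_(t : T) F i t.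
Proof.
rewrite (bigA_distr_bigA F) /=.
rewrite (reindex (fun s : N.-tuple T => [ffun i => tnth s i])) /=.
  by apply: eq_bigr => s _; apply: eq_bigr => i _; rewrite ffunE.
exists (fun f : {ffun 'I_N -> T} => [tuple f i | i < N]) => [s _|f _].
  by apply: eq_from_tnth => i; rewrite tnth_mktuple ffunE.
by apply/ffunP => i; rewrite ffunE tnth_mktuple.
Qed.

Section SampleProbability.
Variables (R : realType) (q : R) (N : nat).

Lemma bern_ge0 b : 0 <= q <= 1 -> 0 <= bern q b.
Proof. by case/andP=> q0 q1; case: b; rewrite /bern ?subr_ge0. Qed.

Lemma sum_bern_tuple : \sum_(s : N.-tuple bool) \prod_(i < N) bern q (tnth s i) = 1.
Proof. by rewrite (sum_tuple_prod (fun _ => bern q)) big1 // => i _; rewrite big_bool /= subrK. Qed.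

Lemma sample_probT : sample_prob q (fun _ : N.-tuple bool => True) = 1.
Proof.
by rewrite /sample_prob (eq_bigl xpredT) ?sum_bern_tuple // => s; rewrite asboolT.
Qed.

Lemma sample_probN (E : N.-tuple bool -> Prop) :
  sample_prob q (fun s => ~ E s) = 1 - sample_prob q E.
Proof.
rewrite -sum_bern_tuple (bigID (fun s => `[< E s >])) /= addrC addrK.
by apply: eq_bigl => s; rewrite asbool_neg.
Qed.

Lemma le_sample_prob (E F : N.-tuple bool -> Prop) : 0 <= q <= 1 ->
  (forall s, E s -> F s) -> sample_prob q E <= sample_prob q F.
Proof.
move=> q01 EF; rewrite /sample_prob [leLHS]big_mkcond [leRHS]big_mkcond /=.
apply: ler_sum => s _; case: asboolP => [/EF Fs|_]; first by rewrite asboolT.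
by case: ifP => // _; apply: prodr_ge0 => i _; exact: bern_ge0.
Qed.

Lemma qhat_ge0 (s : N.-tuple bool) : 0 <= qhat R s.
Proof. by rewrite divr_ge0 // sumr_ge0 // => i _; case: (tnth s i); rewrite ?subrr ?subr0. Qed.

Lemma sum_loss_dev (s : N.-tuple bool) :
  \sum_(i < N) (q - (1 - (tnth s i : nat)%:R)) = N%:R * (q - qhat R s).
Proof.
rewrite sumrB sumr_const card_ord /qhat mulrBr mulr_natl; congr (_ - _).
have [N0|N0] := eqVneq N 0%N.
  rewrite (_ : N%:R = 0) ?mul0r; last by rewrite N0.
  by apply: big1 => i _; have := ltn_ord i; rewrite [X in (_ < X)%N]N0.
by rewrite mulrCA divff ?mulr1 // pnatr_eq0.
Qed.

Lemma sum_tuple_expR_dev h :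
  \sum_(s : N.-tuple bool) (\prod_(i < N) bern q (tnth s i)) * expR (h * (N%:R * (q - qhat R s)))
  = (q * expR (h * (q - 1)) + (1 - q) * expR (h * q)) ^+ N.
Proof.
under eq_bigr do rewrite -sum_loss_dev mulr_sumr expR_sum -big_split /=.
rewrite (sum_tuple_prod (fun _ b => bern q b * expR (h * (q - (1 - (b : nat)%:R))))).
rewrite -[in RHS](card_ord N) -prodr_const; apply: eq_bigr => i _.
by rewrite big_bool /= /bern subrr !subr0 addrC.
Qed.

Lemma hoeffding_tail d : 0 < q < 1 -> 0 < d ->
  sample_prob q (fun s : N.-tuple bool => d <= q - qhat R s) <= expR (- (2 * N%:R * d ^+ 2)).
Proof.
move=> q01 d0; pose h := 4 * d.
pose w (s : N.-tuple bool) := \prod_(i < N) bern q (tnth s i).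
have q01' : 0 <= q <= 1 by case/andP: q01 => q0 q1; rewrite !ltW.
have w0 s : 0 <= w s by apply: prodr_ge0 => i _; exact: bern_ge0.
apply: (@le_trans _ _ (\sum_(s : N.-tuple bool)
    w s * expR (h * (N%:R * (q - qhat R s)) - h * (N%:R * d)))).
  rewrite /sample_prob [leRHS](bigID (fun s => `[< d <= q - qhat R s >])) /=.
  rewrite -[leLHS]addr0 lerD //; last first.
    by apply: sumr_ge0 => s _; rewrite mulr_ge0 ?expR_ge0.
  apply: ler_sum => s /asboolP dev; rewrite -[leLHS]mulr1 ler_wpM2l ?(w0 s) //.
  apply: le_trans (_ : expR 0 <= _); first by rewrite expR0.
  by rewrite ler_expR -mulrBr -mulrBr mulr_ge0 ?mulr_ge0 ?subr_ge0 // /h; lra.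
under eq_bigr do rewrite expRD mulrA.
rewrite -mulr_suml sum_tuple_expR_dev.
apply: (@le_trans _ _ (expR (h ^+ 2 / 8) ^+ N * expR (- (h * (N%:R * d))))).
  rewrite ler_wpM2r ?expR_ge0 // lerXn2r ?nnegrE ?expR_ge0 ?hoeffding_bernoulli //.
    by rewrite addr_ge0 // mulr_ge0 ?expR_ge0 //; lra.
  by rewrite /h; lra.
rewrite -expRM_natr -expRD ler_expR /h -mulr_natr.
by rewrite (_ : _ + _ = - (2 * N%:R * d ^+ 2)) ?lexx //; field.
Qed.

Lemma sample_prob_dev_lt beta r : 0 < q < 1 -> 0 < beta < 1 -> 0 < r ->
  ln (2 / beta) / (2 * r ^+ 2) < N%:R ->
  1 - beta <= sample_prob q (fun s : N.-tuple bool => q - qhat R s < r).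
Proof.
move=> q01 /andP[b0 b1] r0 hN.
have r2 : 0 < 2 * r ^+ 2 by rewrite mulr_gt0 // exprn_gt0.
have tail_le : expR (- (2 * N%:R * r ^+ 2)) <= beta.
  apply: (@le_trans _ _ (expR (- ln (2 / beta)))).
    have -> : 2 * N%:R * r ^+ 2 = N%:R * (2 * r ^+ 2) by ring.
    by rewrite ler_expR lerN2 ltW // -ltr_pdivrMr.
  by rewrite expRN lnK ?posrE ?divr_gt0 // invf_div ler_pdivrMr //; lra.
have q01' : 0 <= q <= 1 by case/andP: q01 => q0 q1; rewrite !ltW.
apply: le_trans (le_sample_prob q01' (E := fun s => ~ r <= q - qhat R s) _).
  by rewrite sample_probN lerB // (le_trans (hoeffding_tail q01 r0)).
by move=> s; rewrite ltNge => /negP.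
Qed.

Lemma sample_prob_dev_lt_bar beta (d : \bar R) : 0 < q < 1 -> 0 < beta < 1 ->
  (0 < d)%E -> sample_cond N beta d ->
  1 - beta <= sample_prob q (fun s : N.-tuple bool => ((q - qhat R s)%:E < d)%E).
Proof.
move=> q01 beta01; have q01' : 0 <= q <= 1 by case/andP: q01 => q0 q1; rewrite !ltW.
case: d => [r| |] //= r0 hN.
  rewrite lte_fin in r0.
  apply: le_trans (sample_prob_dev_lt q01 beta01 r0 hN) (le_sample_prob q01' _) => s.
  by rewrite lte_fin.
apply: le_trans (le_sample_prob q01' (E := fun _ => True) _); last by move=> s _; rewrite ltry.
by rewrite sample_probT lerBlDr lerDl; case/andP: beta01 => /ltW.
Qed.

End SampleProbability.

(** * Quadratic forms *)

Section QuadraticForms.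
Variables (R : realType) (k : nat).
Implicit Types (X Y : 'M[R]_k) (u x : 'cV[R]_k).

Definition qf X x : R := (x^T *m X *m x) 0 0.
Definition bf X u x : R := (u^T *m X *m x) 0 0.
Definition ssq x : R := (x^T *m x) 0 0.

Lemma qfE X x : qf X x = \sum_i \sum_j x i 0 * X i j * x j 0.
Proof.
rewrite /qf mxE exchange_big /=; apply: eq_bigr => j _; rewrite mxE mulr_suml.
by apply: eq_bigr => i _; rewrite mxE.
Qed.

Lemma ssqE x : ssq x = \sum_i x i 0 ^+ 2.
Proof. by rewrite /ssq mxE; apply: eq_bigr => i _; rewrite mxE expr2. Qed.

Lemma ssq_ge0 x : 0 <= ssq x.
Proof. by rewrite ssqE sumr_ge0 // => i _; rewrite sqr_ge0. Qed.

Lemma sqr_le_ssq x i : x i 0 ^+ 2 <= ssq x.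
Proof. by rewrite ssqE (bigD1 i) //= lerDl sumr_ge0 // => j _; rewrite sqr_ge0. Qed.

Lemma qfD X Y x : qf (X + Y) x = qf X x + qf Y x.
Proof. by rewrite /qf mulmxDr mulmxDl !mxE. Qed.

Lemma qfB X Y x : qf (X - Y) x = qf X x - qf Y x.
Proof. by rewrite /qf mulmxBr mulmxBl !mxE. Qed.

Lemma qfZ a X x : qf (a *: X) x = a * qf X x.
Proof. by rewrite /qf -scalemxAr -scalemxAl mxE. Qed.

Lemma bfC X u x : X^T = X -> bf X x u = bf X u x.
Proof.
move=> XT; rewrite /bf -[in LHS](trmxK (x^T *m X *m u)) mxE.
by rewrite !trmx_mul trmxK XT mulmxA.
Qed.

Lemma qf_le_ssq X : exists2 c : R, 0 <= c & forall x, qf X x <= c * ssq x.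
Proof.
exists (\sum_i \sum_j `|X i j|) => [|x]; first by rewrite sumr_ge0 // => i _; rewrite sumr_ge0.
rewrite qfE mulr_suml; apply: ler_sum => i _; rewrite mulr_suml; apply: ler_sum => j _.
apply: le_trans (ler_norm _) _; rewrite !normrM mulrAC mulrC ler_wpM2l //.
have := sqr_le_ssq x i; have := sqr_le_ssq x j.
have : 2 * (`|x i 0| * `|x j 0|) <= x i 0 ^+ 2 + x j 0 ^+ 2.
  rewrite -[x i 0 ^+ 2]real_normK ?num_real // -[x j 0 ^+ 2]real_normK ?num_real //.
  by rewrite -subr_ge0 (_ : _ - _ = (`|x i 0| - `|x j 0|) ^+ 2) ?sqr_ge0 //; ring.
lra.
Qed.

Lemma posdef_qf_ge0 X x : posdef X -> 0 <= qf X x.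
Proof.
move=> [_ Xp]; have [->|/Xp/ltW //] := eqVneq x 0.
by rewrite /qf mulmx0 mxE.
Qed.

Lemma posdef_unit X : posdef X -> X \in unitmx.
Proof.
move=> [_ Xp]; rewrite -row_free_unit -kermx_eq0; apply/negPn/negP => ker_neq0.
have [i ker_i] : exists i, row i (kermx X) != 0.
  apply/existsP; move: ker_neq0; apply: contraR; rewrite negb_exists => /forallP ker0.
  by apply/eqP/row_matrixP => i; rewrite row0; apply/eqP/negbNE/ker0.
have := Xp (row i (kermx X))^T; rewrite trmx_eq0 => /(_ ker_i).
by rewrite trmxK -row_mul mulmx_ker row0 mul0mx mxE ltxx.
Qed.

Lemma qfBZ X a b u x : X^T = X ->
  qf X (a *: u - b *: x) = a ^+ 2 * qf X u - 2 * a * b * bf X u x + b ^+ 2 * qf X x.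
Proof.
move=> XT; have := bfC u x XT; rewrite /qf /bf.
rewrite (_ : (a *: u - b *: x)^T = a *: u^T - b *: x^T); last first.
  by apply/matrixP => i j; rewrite !mxE.
rewrite !mulmxBr !mulmxBl -!scalemxAr -!scalemxAl.
set uu := u^T *m X *m u; set xu := x^T *m X *m u.
set ux := u^T *m X *m x; set xx := x^T *m X *m x.
by clearbody uu xu ux xx => sym; rewrite !mxE sym; ring.
Qed.

Lemma posdef_cauchy_schwarz X u x : posdef X -> bf X u x ^+ 2 <= qf X u * qf X x.
Proof.
move=> PX; have [XT Xp] := PX.
have [->|x0] := eqVneq x 0.
  by rewrite /bf /qf !mulmx0 mxE expr0n /= mulr0.
have c0 : 0 < qf X x by exact: Xp.
have := posdef_qf_ge0 (qf X x *: u - bf X u x *: x) PX.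
rewrite qfBZ // (_ : _ + _ = qf X x * (qf X u * qf X x - bf X u x ^+ 2)); last by ring.
by rewrite pmulr_rge0 // subr_ge0.
Qed.

Lemma posdef_ssq_le_qf X : posdef X -> exists2 c : R, 0 < c & forall x, ssq x <= c * qf X x.
Proof.
move=> PX; have [XT _] := PX.
pose u i : 'cV[R]_k := invmx X *m delta_mx i 0.
have bf_u i x : bf X (u i) x = x i 0.
  rewrite /bf /u trmx_mul trmx_delta trmx_inv XT -!mulmxA mulmxA.
  by rewrite -mulmxA (mulmxA (invmx X)) mulVmx ?posdef_unit // mul1mx -rowE mxE.
exists (1 + \sum_i qf X (u i)).
  by rewrite ltr_pwDl // sumr_ge0 // => i _; exact: posdef_qf_ge0.
move=> x; rewrite ssqE mulrDl mul1r mulr_suml.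
apply: (@le_trans _ _ (\sum_i qf X (u i) * qf X x)).
  by apply: ler_sum => i _; rewrite -bf_u posdef_cauchy_schwarz.
by rewrite lerDr posdef_qf_ge0.
Qed.

End QuadraticForms.

Lemma qf_mul (R : realType) k l (M : 'M[R]_(k, l)) (X : 'M[R]_k) x :
  qf X (M *m x) = qf (M^T *m X *m M) x.
Proof. by rewrite /qf trmx_mul !mulmxA. Qed.

(** * The closed loop under Bernoulli packet losses *)

Section ClosedLoop.
Variables (R : realType) (n m : nat) (A : 'M[R]_n) (B : 'M[R]_(n, m)).
Variables (Q : 'M[R]_n) (Rw : 'M[R]_m).

Definition Cmat_at (P : 'M[R]_n) (q qh : R) : 'M[R]_n :=
  Q + (1 - q) *: ((gain A B Rw P)^T *m Rw *m gain A B Rw P)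
    - (q - qh) *: riccati_term A B Rw P.

Section LyapunovIdentity.
Variables (P : 'M[R]_n) (q qh : R).
Hypotheses (RwT : Rw^T = Rw) (PT : P^T = P).
Hypothesis G_unit : Rw + B^T *m P *m B \in unitmx.
Hypothesis P_mare : P = mare A B Q Rw qh P.

Local Notation G := (Rw + B^T *m P *m B).
Local Notation L := (B^T *m P *m A).
Local Notation K := (gain A B Rw P).
Local Notation T := (riccati_term A B Rw P).
Local Notation U := (K^T *m Rw *m K).

Let GiT : (invmx G)^T = invmx G.
Proof. by rewrite trmx_inv linearD /= RwT !trmx_mul trmxK PT mulmxA. Qed.

Let KE : K = - (invmx G *m L).
Proof. by rewrite /gain !mulmxA. Qed.

Let KTE : K^T = - (L^T *m invmx G).
Proof. by rewrite KE linearN /= trmx_mul GiT. Qed.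

Let LTE : L^T = A^T *m P *m B.
Proof. by rewrite !trmx_mul trmxK PT mulmxA. Qed.

Let TE : T = L^T *m invmx G *m L.
Proof. by rewrite /riccati_term LTE !mulmxA. Qed.

Lemma closed_loop_gram :
  (A + B *m K)^T *m P *m (A + B *m K) = A^T *m P *m A - T - U.
Proof.
have cross_l : A^T *m P *m (B *m K) = - T by rewrite KE TE LTE !mulmxN !mulmxA.
have cross_r : (B *m K)^T *m P *m A = - T by rewrite trmx_mul KTE TE !mulNmx !mulmxA.
have BK_gram : (B *m K)^T *m P *m (B *m K) = T - U.
  rewrite trmx_mul KTE KE TE !mulNmx !mulmxN !opprK.
  have -> : L^T *m invmx G *m L = L^T *m invmx G *m (G *m invmx G) *m L.
    by rewrite mulmxV // mulmx1.
  by rewrite mulmxDl mulmxDr !mulmxDl !mulmxA addrAC subrr add0r.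
by rewrite [(A + _)^T]linearD /= !mulmxDl !mulmxDr cross_l cross_r BK_gram addKr.
Qed.

Lemma lyapunov_identity :
  q *: (A^T *m P *m A) + (1 - q) *: ((A + B *m K)^T *m P *m (A + B *m K))
  = P - Cmat_at P q qh.
Proof.
rewrite closed_loop_gram /Cmat_at.
set X := A^T *m P *m A; set T' := riccati_term _ _ _ P; set U' := _ *m Rw *m _.
rewrite [in RHS]P_mare /mare -/X -/T'.
by apply/matrixP => i j; rewrite !mxE; ring.
Qed.

End LyapunovIdentity.

Lemma sum_tuple_cons (V : nmodType) t (F : t.+1.-tuple bool -> V) :
  \sum_(s : t.+1.-tuple bool) F s = \sum_(b : bool) \sum_(s : t.-tuple bool) F [tuple of b :: s].
Proof.
rewrite pair_bigA /= (reindex (fun p : bool * t.-tuple bool => [tuple of p.1 :: p.2])) //=.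
exists (fun s : t.+1.-tuple bool => (thead s, [tuple of behead s])) => [[b s] _|s _].
  by congr pair; apply: val_inj.
by rewrite [in RHS](tuple_eta s).
Qed.

Section Expectation.
Variables (K : 'M[R]_(m, n)) (q : R).
Hypothesis q01 : 0 <= q <= 1.

Definition step_mx (b : bool) : 'M[R]_n := A + (b : nat)%:R *: (B *m K).

Definition Etraj t (f : 'cV[R]_n -> R) (x0 : 'cV[R]_n) : R :=
  \sum_(s : t.-tuple bool) (\prod_(i < t) bern q (tnth s i)) *
     f (traj A B K (fun j => nth false s j) x0 t).

Lemma msq_given_x0E x0 t : msq_given_x0 A B q K x0 t = Etraj t (fun x => ssq x) x0.
Proof. by []. Qed.

Lemma step_mx0 : step_mx false = A.
Proof. by rewrite /step_mx scale0r addr0. Qed.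

Lemma step_mx1 : step_mx true = A + B *m K.
Proof. by rewrite /step_mx scale1r. Qed.

Lemma trajS lam x0 t :
  traj A B K lam x0 t.+1 = traj A B K (fun j => lam j.+1) (step_mx (lam 0%N) *m x0) t.
Proof.
by elim: t => [//|t IH]; rewrite -[LHS]/(step_mx (lam t.+1) *m traj A B K lam x0 t.+1) IH.
Qed.

Lemma EtrajS t f x0 : Etraj t.+1 f x0 = \sum_(b : bool) bern q b * Etraj t f (step_mx b *m x0).
Proof.
rewrite /Etraj sum_tuple_cons; apply: eq_bigr => b _; rewrite mulr_sumr.
apply: eq_bigr => s _; rewrite big_ord_recl trajS /= -mulrA; congr (_ * (_ * _)).
by apply: eq_bigr => i _; rewrite !(tnth_nth false).
Qed.

Lemma Etraj_ge0 t f x0 : (forall x, 0 <= f x) -> 0 <= Etraj t f x0.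
Proof.
move=> f_ge0; apply: sumr_ge0 => s _.
by rewrite mulr_ge0 // prodr_ge0 // => i _; exact: bern_ge0.
Qed.

Lemma ler_Etraj t f g x0 : (forall x, f x <= g x) -> Etraj t f x0 <= Etraj t g x0.
Proof.
move=> fg; apply: ler_sum => s _; rewrite ler_wpM2l //.
by apply: prodr_ge0 => i _; exact: bern_ge0.
Qed.

Lemma EtrajZ t c f x0 : Etraj t (fun x => c * f x) x0 = c * Etraj t f x0.
Proof. by rewrite /Etraj mulr_sumr; apply: eq_bigr => s _; rewrite mulrCA. Qed.

Lemma Etraj_contraction (V : 'cV[R]_n -> R) rho : 0 <= rho ->
  (forall x, \sum_(b : bool) bern q b * V (step_mx b *m x) <= rho * V x) ->
  forall t x0, Etraj t V x0 <= rho ^+ t * V x0.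
Proof.
move=> rho0 contract; elim=> [|t IH] x0.
  rewrite expr0 mul1r /Etraj (eq_bigr (fun _ => V x0)) ?sumr_const ?card_tuple //.
  by move=> s _; rewrite big_ord0 mul1r.
rewrite EtrajS exprSr -mulrA.
apply: le_trans (ler_wpM2l (exprn_ge0 t rho0) (contract x0)).
rewrite mulr_sumr; apply: ler_sum => b _; rewrite mulrCA.
by rewrite ler_wpM2l ?bern_ge0.
Qed.

End Expectation.

Section MeanSquareStability.
Variables (K : 'M[R]_(m, n)) (q : R).
Hypothesis q01 : 0 <= q <= 1.

Fixpoint traj_mx (lam : nat -> bool) t : 'M[R]_n :=
  if t is t'.+1 then step_mx K (lam t') *m traj_mx lam t' else 1%:M.

Lemma trajE lam x0 t : traj A B K lam x0 t = traj_mx lam t *m x0.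
Proof. by elim: t => [|t IH] /=; rewrite ?mul1mx // IH mulmxA. Qed.

Lemma measurable_msq d (T : measurableType d) (x0 : T -> 'cV[R]_n) t :
  (forall i : 'I_n, measurable_fun setT (fun w => x0 w i 0)) ->
  measurable_fun setT (fun w => msq_given_x0 A B q K (x0 w) t).
Proof.
move=> mx0; apply: measurable_sum => s.
apply: (measurable_funM (f := cst _)); first exact: measurable_cst.
pose M := traj_mx (fun j => nth false s j) t.
rewrite (_ : (fun w => ssq _) = fun w => \sum_(k < n)
   (\sum_(j < n) M k j * x0 w j 0) * (\sum_(j < n) M k j * x0 w j 0)); last first.
  by apply/funext => w; rewrite trajE ssqE; apply: eq_bigr => k _; rewrite expr2 mxE.
apply: measurable_sum => k.
have mk : measurable_fun setT (fun w => \sum_(j < n) M k j * x0 w j 0).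
  apply: measurable_sum => j.
  by apply: (measurable_funM (f := cst _)); [exact: measurable_cst | exact: mx0].
exact: measurable_funM.
Qed.

Lemma ms_stabilizes_of_geometric D rho : 0 <= D -> 0 <= rho < 1 ->
  (forall x0 t, msq_given_x0 A B q K x0 t <= D * rho ^+ t * ssq x0) ->
  ms_stabilizes A B q K.
Proof.
move=> D0 /andP[rho0 rho1] msq_le d T P x0 mx0 ix0.
have ssq_int : P.-integrable setT (fun w => (ssq (x0 w))%:E).
  rewrite (_ : (fun w => _) = fun w => \sum_(i < n) ((x0 w i 0) ^+ 2)%:E).
    by apply: (integrable_sum measurableT) => i _; exact: ix0.
  by apply/funext => w; rewrite sumEFin ssqE.
have [ssq_meas _] := integrableP _ _ _ ssq_int.
have If := integrable_fin_num measurableT ssq_int.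
set I := (\int[P]_w (ssq (x0 w))%:E)%E in If.
have msq_ge0 w t : 0 <= msq_given_x0 A B q K (x0 w) t.
  by rewrite msq_given_x0E Etraj_ge0 // => x; exact: ssq_ge0.
apply: (@squeeze_cvge _ _ _ _ (fun _ => 0%E) _ (fun t => ((D * rho ^+ t)%:E * I)%E)).
- apply: filterE => t; apply/andP; split.
    by apply: integral_ge0 => w _; rewrite lee_fin.
  rewrite -ge0_integralZl_EFin ?mulr_ge0 ?exprn_ge0 //; last first.
    by move=> w _; rewrite lee_fin ssq_ge0.
  apply: ge0_le_integral => //.
  + by move=> w _; rewrite lee_fin.
  + by apply/measurable_EFinP; exact: measurable_msq.
  + exact: measurable_funeM.
  + by move=> w _; rewrite -EFinM lee_fin msq_le.
- exact: cvg_cst.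
- rewrite -(fineK If) (_ : (fun t => _) = fun t => (geometric (D * fine I) rho t)%:E).
    by apply: cvg_EFin; [exact: filterE | apply: cvg_geometric; rewrite ger0_norm].
  by apply/funext => t; rewrite -EFinM /geometric mulrAC.
Qed.

End MeanSquareStability.

Section MeanSquareDecay.
Variables (P : 'M[R]_n) (q qh : R).
Hypotheses (PRw : posdef Rw) (PP : posdef P) (P_mare : P = mare A B Q Rw qh P).
Hypotheses (q01 : 0 <= q <= 1) (PC : posdef (Cmat_at P q qh)).

Local Notation K := (gain A B Rw P).

Lemma posdef_gain_denom : posdef (Rw + B^T *m P *m B).
Proof.
have [RT Rp] := PRw; have [PT _] := PP.
split; first by rewrite linearD /= RT !trmx_mul trmxK PT mulmxA.
move=> x x0; rewrite -/(qf _ x) qfD -qf_mul.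
by rewrite (lt_le_trans (Rp x x0)) // lerDl posdef_qf_ge0.
Qed.

Lemma lyapunov_contraction : exists2 rho, 0 <= rho < 1 &
  forall x, \sum_(b : bool) bern q b * qf P (step_mx K b *m x) <= rho * qf P x.
Proof.
have [RT _] := PRw; have [PT _] := PP.
have [cP cP0 qf_le] := qf_le_ssq P; have [cC cC0 ssq_le] := posdef_ssq_le_qf PC.
have cPC1 : 0 < 1 + cP * cC by rewrite ltr_pwDl // mulr_ge0 // ltW.
pose eps := (1 + cP * cC)^-1.
exists (1 - eps).
  rewrite subr_ge0 ltrBlDr ltrDl invr_gt0 cPC1 andbT invf_le1 // lerDl.
  by rewrite mulr_ge0 // ltW.
(* qf P <= cP * ssq <= cP * cC * qf C: the decrease qf C is a fixed fraction of qf P. *)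
move=> x; rewrite big_bool /= step_mx0 step_mx1 /bern addrC !qf_mul -!qfZ -qfD.
rewrite (lyapunov_identity q RT PT (posdef_unit posdef_gain_denom) P_mare) qfB.
rewrite qfZ mulrBl mul1r lerD2l lerN2.
have eps0 : 0 <= eps by rewrite invr_ge0 ltW.
apply: le_trans (ler_wpM2l eps0 (qf_le x)) _.
apply: le_trans (ler_wpM2l eps0 (ler_wpM2l cP0 (ssq_le x))) _.
rewrite !mulrA ler_piMl ?posdef_qf_ge0 //.
by rewrite -mulrA mulrC ler_pdivrMr // mul1r lerDr.
Qed.

Lemma ms_stabilizes_gain : ms_stabilizes A B q K.
Proof.
have [rho rho01 contract] := lyapunov_contraction.
have [cP cP0 qf_le] := qf_le_ssq P; have [c c0 ssq_le] := posdef_ssq_le_qf PP.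
apply: (ms_stabilizes_of_geometric q01 (mulr_ge0 (ltW c0) cP0) rho01) => x0 t.
rewrite msq_given_x0E; apply: le_trans (ler_Etraj _ q01 t x0 ssq_le) _.
rewrite EtrajZ -!mulrA ler_wpM2l ?(ltW c0) //.
case/andP: rho01 => rho0 _.
apply: le_trans (Etraj_contraction q01 rho0 contract t x0) _.
by rewrite mulrCA ler_wpM2l ?exprn_ge0.
Qed.

End MeanSquareDecay.

Lemma Phat_spec p : (exists X, posdef X /\ X = mare A B Q Rw p X) ->
  posdef (Phat A B Q Rw p) /\ Phat A B Q Rw p = mare A B Q Rw p (Phat A B Q Rw p).
Proof. exact: xgetPex. Qed.

Lemma delta_bar_posdef qc q qh : 0 <= qh < qc ->
  ((q - qh)%:E < delta_bar A B Q Rw qc q)%E -> posdef (Cmat A B Q Rw q qh).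
Proof. by move=> qh_range /ereal_sup_gt[_ [d [d0 Cd] <-]]; rewrite lte_fin; exact: Cd. Qed.

End ClosedLoop.

Theorem lemma3 (R : realType) (n m : nat) (A : 'M[R]_n) (B : 'M[R]_(n, m))
  (Q : 'M[R]_n) (Rw : 'M[R]_m) (qc q beta : R) (N : nat) :
  stabilizable A B -> posdef Q -> posdef Rw ->
  0 < qc <= 1 ->
  (forall p : R, 0 <= p < qc ->
     exists! X : 'M[R]_n, posdef X /\ X = mare A B Q Rw p X) ->
  0 < q < 1 -> q < qc ->
  0 < beta < 1 ->
  (0 < delta_bar A B Q Rw qc q)%E ->
  sample_cond N beta (delta_bar A B Q Rw qc q) ->
  1 - beta <=
    sample_prob q (fun s : N.-tuple bool =>
      qhat R s < qc ->
      ms_stabilizes A B q (gain A B Rw (Phat A B Q Rw (qhat R s)))).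
Proof.
move=> _ _ PRw _ MARE_sol q01 _ beta01 delta_gt0 N_large.
have q01' : 0 <= q <= 1 by case/andP: q01 => q0 q1; rewrite !ltW.
apply: le_trans (sample_prob_dev_lt_bar q01 beta01 delta_gt0 N_large) (le_sample_prob q01' _).
move=> s dev_lt qh_lt.
have qh_range : 0 <= qhat R s < qc by rewrite qhat_ge0 qh_lt.
have [X [PX _]] := MARE_sol _ qh_range.
have [PPh Ph_mare] := Phat_spec (ex_intro _ X PX).
exact: ms_stabilizes_gain PRw PPh Ph_mare q01' (delta_bar_posdef qh_range dev_lt).
Qed.
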